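(* Let $P_k\ge 3$, let $w_k$ be an integer with $1<w_k<P_k$, let $\mu>0$, $\beta>0$, $s_k>0$, and let $\nu\in\mathbb{R}^{P_k}$ with $\nu_1\ge\nu_2\ge\dots\ge\nu_{P_k}$. Consider $$\min_{x\in\mathbb{R}^{P_k},\ x\ge 0,\ \|x\|_0\le w_k}\ \ -U_k\Big(\sum_{i=1}^{P_k}x_i\Big)+\frac{\mu}{2}\|x-\nu\|_2^2 .$$ Then there is a minimizer $x^\star$ of this problem satisfying $$x^\star_i=\max(0,\nu_i+\zeta)\ \ (i=1,\dots,w_k),\qquad x^\star_i=0\ \ (i>w_k),$$ where $\zeta>0$ satisfies $\sum_{i=1}^{w_k}\max(0,\nu_i+\zeta)>0$ and $\mu\zeta=U_k'\big(\sum_{i=1}^{w_k}\max(0,\nu_i+\zeta)\big)$. Moreover, with the convention $U_k'(0)=+\infty$: if there is a smallest index $i'\in\{2,\dots,w_k\}$ such that $\zeta_0:=-\nu_{i'}>0$ and $\mu\zeta_0\ge U_k'\big(\sum_{i=1}^{w_k}\max(0,\nu_i+\zeta_0)\big)$, then $\zeta$ is the largest real root of $$\mu\zeta\Big(\sum_{i=1}^{i'-1}(\nu_i+\zeta)\Big)^2=\beta\sum_{i=1}^{i'-1}(\nu_i+\zeta)+s_k ;$$ otherwise $\zeta$ is the largest real root of $$\mu\zeta\Big(\sum_{i=1}^{w_k}(\nu_i+\zeta)\Big)^2=\beta\sum_{i=1}^{w_k}(\nu_i+\zeta)+s_k .$$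
   Context: $U_k(u)=\beta\log u-\frac{s_k}{u}$ for $u>0$ (so $U_k'(u)=\frac{\beta}{u}+\frac{s_k}{u^2}$), and $-U_k(0)$ is taken to be $+\infty$, so that the objective equals $+\infty$ at $x=0$. $\|x\|_0$ denotes the number of nonzero entries of $x$. *)

From HB Require Import structures.
From mathcomp Require Import all_boot all_order all_algebra.
From mathcomp Require Import all_classical all_reals all_analysis.
Set Implicit Arguments. Unset Strict Implicit. Unset Printing Implicit Defensive.
Import Order.TTheory GRing.Theory Num.Theory.
Local Open Scope ring_scope.

Section Defs.
Variable R : realType.

Definition Uk (beta s u : R) : R := beta * ln u - s / u.

Definition dUk (beta s u : R) : R := beta / u + s / u ^+ 2.

(* Objective -U_k(sum x) + mu/2 ||x - nu||^2, with value +oo when sum x <= 0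
   (on the feasible set x >= 0 this happens exactly at x = 0, where -U_k(0)=+oo). *)
Definition objective (P : nat) (beta s mu : R) (nu x : 'I_P -> R) : \bar R :=
  let S := \sum_(i < P) x i in
  if 0 < S then
    (- Uk beta s S + mu / 2 * \sum_(i < P) (x i - nu i) ^+ 2)%:E
  else +oo%E.

Definition feasible (P w : nat) (x : 'I_P -> R) : Prop :=
  (forall i, 0 <= x i) /\ (#|[set i | x i != 0%R]| <= w)%N.

Definition is_minimizer (P w : nat) (beta s mu : R) (nu x : 'I_P -> R) : Prop :=
  feasible w x /\
  forall y : 'I_P -> R, feasible w y ->
    (objective beta s mu nu x <= objective beta s mu nu y)%E.

(* sum_{i=1}^{w} max(0, nu_i + z)  (0-based: indices i < w) *)
Definition Ssum (P w : nat) (nu : 'I_P -> R) (z : R) : R :=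
  \sum_(i < P | (i < w)%N) Num.max 0 (nu i + z).

Definition cubic_eq (P m : nat) (mu beta s : R) (nu : 'I_P -> R) (z : R) : Prop :=
  let T := \sum_(i < P | (i < m)%N) (nu i + z) in
  mu * z * T ^+ 2 = beta * T + s.

Definition largest_root (p : R -> Prop) (z : R) : Prop :=
  p z /\ forall y, p y -> y <= z.

(* condition on (0-based) index j, i.e. paper index i' = j+1:
   zeta0 := -nu_j > 0 and mu zeta0 >= U'(S(zeta0)) with U'(0) = +oo
   (so the condition requires S(zeta0) > 0). *)
Definition idx_cond (P w : nat) (mu beta s : R) (nu : 'I_P -> R) (j : 'I_P) : Prop :=
  let z0 := - nu j in
  0 < z0 /\ 0 < Ssum w nu z0 /\ dUk beta s (Ssum w nu z0) <= mu * z0.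

End Defs.

From HB Require Import structures.
From mathcomp Require Import all_boot all_order all_algebra.
From mathcomp Require Import all_classical all_reals all_analysis.
From mathcomp Require Import lra ring.
Set Implicit Arguments. Unset Strict Implicit. Unset Printing Implicit Defensive.
Import Order.TTheory GRing.Theory Num.Theory.
Import numFieldNormedType.Exports.
Local Open Scope ring_scope.

(* Write S(z) for
   sum_{i<w} max(0, nu_i + z) and c_i = nu_i + zeta.
   1. Scalar equation.  For S > 0, mu z = U'(S) is equivalent to the continuous
      equation mu z S^2 = beta S + s.  At z = -nu_0 we have S = 0 and the
      difference of the two sides is -s < 0; at a large z it is >= 0.  The
      intermediate value theorem yields a "stationary" zeta, which is positive
      because U' > 0.
   2. Optimality of x = (max(0, c_i))_{i<w} padded by zeros.  U is concave, so
      U(S_y) <= U(S_x) + mu zeta (S_y - S_x); after completing the square the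
      comparison of objectives reduces to ||x - c||^2 <= ||y - c||^2, i.e. x is
      the projection of the nonincreasing vector c onto {y >= 0, ||y||_0 <= w}.
      This holds because any set of at most w indices carries at most the mass
      of the first w indices.
   3. Root characterisation.  For a stationary zeta the paper's index condition
      at j says exactly nu_j + zeta <= 0, so the active coordinates form a
      prefix, S is affine on it, and zeta is the largest root of the cubic since
      U' decreases while mu z increases. *)

Section Utility.
Variables (R : realType) (beta s : R).

Lemma dUk_gt0 (u : R) : 0 < beta -> 0 < s -> 0 < u -> 0 < dUk beta s u.
Proof. by move=> *; rewrite /dUk addr_gt0 // divr_gt0 // exprn_gt0. Qed.

Lemma dUk_antitone (u v : R) : 0 <= beta -> 0 <= s -> 0 < u -> u <= v ->
  dUk beta s v <= dUk beta s u.
Proof.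
move=> b0 s0 u0 uv; have v0 : 0 < v := lt_le_trans u0 uv.
rewrite /dUk; apply: lerD; apply: ler_wpM2l => //; rewrite lef_pV2 ?posrE ?exprn_gt0 //.
by rewrite ler_pXn2r // ?nnegrE ltW.
Qed.

Lemma dUk_eq (u c : R) : 0 < u -> (c = dUk beta s u) <-> (c * u ^+ 2 = beta * u + s).
Proof.
move=> u0; have u2 : u ^+ 2 != 0 by rewrite expf_neq0 // gt_eqF.
split=> [-> | e]; first by rewrite /dUk; field; rewrite gt_eqF.
by apply: (mulIf u2); rewrite e /dUk; field; rewrite gt_eqF.
Qed.

Lemma Uk_tangent (u v : R) : 0 <= beta -> 0 <= s -> 0 < u -> 0 < v ->
  Uk beta s v <= Uk beta s u + dUk beta s u * (v - u).
Proof.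
move=> b0 s0 u0 v0.
have ln_le : ln v - ln u <= v / u - 1.
  have vu : v / u \is Num.pos by rewrite posrE divr_gt0.
  rewrite -ln_div ?posrE //; have := expR_ge1Dx (ln (v / u)); rewrite lnK //; lra.
have log_part : beta * (ln v - ln u) <= beta / u * (v - u).
  have -> : beta / u * (v - u) = beta * (v / u - 1) by field; rewrite gt_eqF.
  exact: ler_wpM2l.
have inv_part : s / u - s / v - s / u ^+ 2 * (v - u) = - (s * (v - u) ^+ 2 / (u ^+ 2 * v)).
  by field; rewrite !gt_eqF.
have sq_ge0 : 0 <= s * (v - u) ^+ 2 / (u ^+ 2 * v).
  apply: divr_ge0; first by rewrite mulr_ge0 ?sqr_ge0.
  by rewrite ltW // mulr_gt0 // exprn_gt0.
rewrite /Uk /dUk; lra.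
Qed.

End Utility.

Lemma sum_sqr_shift (R : comRingType) (P : nat) (v nu : 'I_P -> R) (z : R) :
  \sum_(i < P) (v i - nu i) ^+ 2 = \sum_(i < P) (v i - (nu i + z)) ^+ 2
    + 2 * z * \sum_(i < P) v i - \sum_(i < P) (2 * nu i * z + z ^+ 2).
Proof. by rewrite mulr_sumr -big_split -sumrB; apply: eq_bigr => i _ /=; ring. Qed.

Section WaterLevel.
Variables (R : realType) (P w : nat) (nu : 'I_P -> R).

Lemma Ssum_ge0 (z : R) : 0 <= Ssum w nu z.
Proof. by apply: sumr_ge0 => i _; rewrite le_max lexx. Qed.

Lemma Ssum_le (z1 z2 : R) : z1 <= z2 -> Ssum w nu z1 <= Ssum w nu z2.
Proof. by move=> z12; apply: ler_sum => i _; rewrite le_max2 ?lerD2l. Qed.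

Lemma Ssum_ge_term (i : 'I_P) (z : R) : (i < w)%N -> nu i + z <= Ssum w nu z.
Proof.
move=> iw; rewrite /Ssum (bigD1 i) //= -[leLHS]addr0.
apply: lerD; first by rewrite le_max lexx orbT.
by apply: sumr_ge0 => j _; rewrite le_max lexx.
Qed.

Lemma Ssum_eq0 (i0 : 'I_P) (z : R) :
  (forall i, nu i <= nu i0) -> nu i0 + z <= 0 -> Ssum w nu z = 0.
Proof.
move=> top nonpos; rewrite /Ssum big1 // => i _; apply/max_idPl.
by apply: le_trans nonpos; rewrite lerD2r.
Qed.

Lemma Ssum_prefix (m : nat) (z : R) : (m <= w)%N ->
  (forall i : 'I_P, (i < m)%N -> 0 < nu i + z) ->
  (forall i : 'I_P, (m <= i < w)%N -> nu i + z <= 0) ->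
  Ssum w nu z = \sum_(i < P | (i < m)%N) (nu i + z).
Proof.
move=> mw pos nonpos; rewrite /Ssum big_mkcond [RHS]big_mkcond.
apply: eq_bigr => i _; have [im | mi] := ltnP i m.
  by rewrite (leq_trans im mw); apply/max_idPr/ltW/pos.
by case: ifP => // iw; apply/max_idPl/nonpos; rewrite mi.
Qed.

Lemma Ssum_continuous : continuous (Ssum w nu).
Proof.
rewrite /Ssum; apply: (@continuous_big _ _ +%R 0 _ add_continuous) => i _ z.
apply: continuous_max; first exact: cvg_cst.
by apply: cvgD; [exact: cvg_cst | exact: cvg_id].
Qed.

End WaterLevel.

Section SparseProjection.
Variables (R : realType) (P w : nat).
Hypothesis wP : (w < P)%N.

Lemma card_prefix : #|[set i : 'I_P | (i < w)%N]| = w.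
Proof.
rewrite -sum1_card (eq_bigl (fun i : 'I_P => (i < w)%N)) => [|i]; last by rewrite inE.
by rewrite -(big_ord_widen _ (fun _ => 1%N) (ltnW wP)) sum1_card card_ord.
Qed.

Lemma sum_prefix_max (m : 'I_P -> R) (A : {set 'I_P}) :
  (forall i, 0 <= m i) -> (forall i j : 'I_P, (i <= j)%N -> m j <= m i) ->
  (#|A| <= w)%N -> \sum_(i in A) m i <= \sum_(i < P | (i < w)%N) m i.
Proof.
move=> m_ge0 m_anti cardA; set L := [set i : 'I_P | (i < w)%N].
have -> : \sum_(i < P | (i < w)%N) m i = \sum_(i in L) m i.
  by apply: eq_bigl => i; rewrite inE.
rewrite (big_setID L) [leRHS](big_setID A) /= finset.setIC lerD2l.
(* compare both differences with the weight t of the first index outside L *)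
set t := m (Ordinal wP).
have out_le : \sum_(i in A :\: L) m i <= t *+ #|A :\: L|.
  rewrite -sumr_const; apply: ler_sum => i; rewrite !inE -leqNgt => /andP[wi _].
  exact: m_anti.
have in_ge : t *+ #|L :\: A| <= \sum_(i in L :\: A) m i.
  rewrite -sumr_const; apply: ler_sum => i; rewrite !inE => /andP[_ iw].
  exact/m_anti/ltnW.
have card_le : (#|A :\: L| <= #|L :\: A|)%N.
  rewrite -(leq_add2l #|A :&: L|) cardsID -[in X in (_ <= X)%N]finset.setIC.
  by rewrite cardsID card_prefix.
apply: le_trans out_le (le_trans _ in_ge).
rewrite -mulr_natr -[t *+ #|L :\: A|]mulr_natr.
by apply: ler_wpM2l; [exact: m_ge0 | rewrite ler_nat].
Qed.

Definition sparse_proj (c : 'I_P -> R) (i : 'I_P) : R :=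
  if (i < w)%N then Num.max 0 (c i) else 0.

Lemma sparse_proj_feasible (c : 'I_P -> R) : feasible w (sparse_proj c).
Proof.
split=> [i | ]; first by rewrite /sparse_proj; case: ifP; rewrite ?le_max lexx.
rewrite -card_prefix subset_leq_card //; apply/fintype.subsetP => i.
by rewrite !inE /sparse_proj; case: ifP; rewrite ?eqxx.
Qed.

Lemma sparse_proj_optimal (c y : 'I_P -> R) :
  (forall i j : 'I_P, (i <= j)%N -> c j <= c i) -> feasible w y ->
  \sum_(i < P) (sparse_proj c i - c i) ^+ 2 <= \sum_(i < P) (y i - c i) ^+ 2.
Proof.
move=> c_anti [y_ge0 y_card]; set m := fun i => Num.max 0 (c i) ^+ 2.
have proj_split : \sum_(i < P) (sparse_proj c i - c i) ^+ 2 + \sum_(i < P | (i < w)%N) m i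
    = \sum_(i < P) c i ^+ 2.
  rewrite [X in _ + X]big_mkcond -big_split; apply: eq_bigr => i _ /=.
  rewrite /sparse_proj /m; case: ifP => _; last by rewrite sub0r sqrrN addr0.
  by case: (leP 0 (c i)) => _; ring.
have y_split : \sum_(i < P) c i ^+ 2
    <= \sum_(i < P) (y i - c i) ^+ 2 + \sum_(i in [set i | y i != 0]) m i.
  rewrite [X in _ + X]big_mkcond -big_split /=; apply: ler_sum => i _; rewrite inE /m.
  case: eqP => [-> | _]; first by rewrite sub0r sqrrN addr0.
  have := y_ge0 i; case: (leP 0 (c i)) => ci yi; first by rewrite lerDr sqr_ge0.
  rewrite expr0n addr0; nra.
have top : \sum_(i in [set i | y i != 0]) m i <= \sum_(i < P | (i < w)%N) m i.
  apply: sum_prefix_max y_card => [i | i j ij]; first exact: sqr_ge0.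
  have := le_max2 (lexx 0) (c_anti _ _ ij).
  by rewrite /m !expr2 => cij; apply: ler_pM => //; rewrite le_max lexx.
lra.
Qed.

End SparseProjection.

Section Stationary.
Variables (R : realType) (P w : nat) (mu beta s : R) (nu : 'I_P -> R).
Hypotheses (mu_gt0 : 0 < mu) (beta_gt0 : 0 < beta) (s_gt0 : 0 < s).
Variable i0 : 'I_P.
Hypotheses (i0w : (i0 < w)%N) (i0_top : forall i, nu i <= nu i0).

Definition stationary (z : R) : Prop :=
  0 < Ssum w nu z /\ mu * z = dUk beta s (Ssum w nu z).

Lemma stationary_exists : exists z, stationary z.
Proof.
pose h z := mu * z * (Ssum w nu z * Ssum w nu z) - beta * Ssum w nu z - s.
set a := - nu i0; set b := `|nu i0| + 1 + (beta + s) / mu.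
have q_ge0 : 0 <= (beta + s) / mu by rewrite divr_ge0 // ltW // addr_gt0.
have norm_ge : - nu i0 <= `|nu i0| by rewrite -normrN ler_norm.
have ab : a <= b by rewrite /a /b; lra.
have ha : h a = - s by rewrite /h (Ssum_eq0 w i0_top) /a ?subrr //; ring.
have hb : 0 <= h b.
  have S1 : 1 <= Ssum w nu b.
    by apply: le_trans (Ssum_ge_term nu _ i0w); rewrite /b; lra.
  have mub : beta + s <= mu * b.
    rewrite /b mulrDr mulrCA divff ?mulr1 ?gt_eqF // lerDr.
    by rewrite mulr_ge0 ?ltW // ltr_wpDl.
  rewrite /h; set S := Ssum w nu b in S1 *.
  have SS : S <= S * S by rewrite ler_peMr // (le_trans ler01).
  have := ler_wpM2r (mulr_ge0 (le_trans ler01 S1) (le_trans ler01 S1)) mub.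
  have := ler_wpM2l (ltW beta_gt0) SS; have := ler_peMr (ltW s_gt0) (le_trans S1 SS).
  lra.
have S_cont : continuous (Ssum w nu) by exact: Ssum_continuous.
have h_cont : continuous h.
  move=> z; apply: cvgB; [apply: cvgB | exact: cvg_cst].
  - apply: cvgM; apply: cvgM.
    + exact: cvg_cst.
    + exact: cvg_id.
    + exact: S_cont.
    + exact: S_cont.
  - by apply: cvgM; [exact: cvg_cst | exact: S_cont].
have [z _ hz] : exists2 z : R, z \in `[a, b] & h z = 0.
  apply: IVT => //; first exact: continuous_subspaceT.
  by rewrite ge_min le_max ha hb orbT oppr_le0 ltW.
(* h z = 0 rules out S(z) = 0, where h equals -s *)
have Sz_gt0 : 0 < Ssum w nu z.
  rewrite lt_def Ssum_ge0 andbT; apply/eqP => S0.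
  by move: hz; rewrite /h S0 !mulr0 subr0 sub0r => /eqP; rewrite oppr_eq0 gt_eqF.
exists z; split => //; apply/dUk_eq => //; move: hz; rewrite /h expr2; lra.
Qed.

Variable z : R.
Hypothesis zs : stationary z.

Lemma stationary_gt0 : 0 < z.
Proof.
case: zs => S0 e; have := dUk_gt0 beta_gt0 s_gt0 S0.
by rewrite -e pmulr_rgt0.
Qed.

Lemma stationary_head : 0 < nu i0 + z.
Proof.
rewrite ltNge; apply/negP => h0; case: zs => S0 _.
by move: S0; rewrite (Ssum_eq0 _ i0_top h0) ltxx.
Qed.

Lemma idx_cond_inactive (j : 'I_P) :
  idx_cond w mu beta s nu j <-> nu j + z <= 0.
Proof.
case: zs => S0 e; have z0 := stationary_gt0.
split=> [[/= z0j [S0j cond]] | inact].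
  (* if -nu_j < z then mu z = U'(S z) <= U'(S(-nu_j)) <= mu (-nu_j) < mu z *)
  suff : z <= - nu j by lra.
  rewrite leNgt; apply/negP => lt.
  have mu_lt : mu * - nu j < mu * z by rewrite ltr_pM2l.
  have := dUk_antitone (ltW beta_gt0) (ltW s_gt0) S0j (Ssum_le w nu (ltW lt)).
  rewrite -e; lra.
have zj : z <= - nu j by lra.
have Sle := Ssum_le w nu zj.
split; first by lra.
split; first exact: lt_le_trans Sle.
apply: le_trans (dUk_antitone (ltW beta_gt0) (ltW s_gt0) S0 Sle) _.
by rewrite -e ler_pM2l.
Qed.

(* If the active coordinates are exactly the first m, then z is the largest
   root of the cubic on that prefix: beyond z, U' decreases while mu y grows. *)
Lemma stationary_largest_root (m : nat) : (m <= w)%N ->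
  (forall i : 'I_P, (i < m)%N -> 0 < nu i + z) ->
  (forall i : 'I_P, (m <= i < w)%N -> nu i + z <= 0) ->
  largest_root (cubic_eq m mu beta s nu) z.
Proof.
move=> mw pos nonpos; case: zs; rewrite (Ssum_prefix mw pos nonpos).
set T := fun y => \sum_(i < P | (i < m)%N) (nu i + y) => T0 e.
split; first by apply/dUk_eq.
move=> y; rewrite /cubic_eq /= -/(T y) => hy; rewrite leNgt; apply/negP => zy.
have Tzy : T z <= T y by apply: ler_sum => i _; rewrite lerD2l ltW.
have Ty0 : 0 < T y := lt_le_trans T0 Tzy.
have : dUk beta s (T y) < mu * y.
  apply: le_lt_trans (dUk_antitone (ltW beta_gt0) (ltW s_gt0) T0 Tzy) _.
  by rewrite -e ltr_pM2l.
by rewrite -((dUk_eq beta s _ Ty0).2 hy) ltxx.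
Qed.

End Stationary.

(* A stationary z makes the sparse projection of nu + z a global minimizer:
   concavity of U handles the utility term, the projection the quadratic one. *)
Lemma stationary_minimizer (R : realType) (P w : nat) (mu beta s : R)
    (nu : 'I_P -> R) (z : R) :
  (w < P)%N -> 0 < mu -> 0 < beta -> 0 < s ->
  (forall i j : 'I_P, (i <= j)%N -> nu j <= nu i) -> stationary w mu beta s nu z ->
  is_minimizer w beta s mu nu (sparse_proj w (fun i => nu i + z)).
Proof.
move=> wP mu_gt0 beta_gt0 s_gt0 nu_anti [S0 e].
set x := sparse_proj w _; split=> [|y y_feas]; first exact: sparse_proj_feasible.
have Sx : \sum_(i < P) x i = Ssum w nu z.
  by rewrite /Ssum [RHS]big_mkcond; apply: eq_bigr => i _.
rewrite /objective Sx S0; case: ifP => Sy; last by rewrite leey.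
have tangent := Uk_tangent (ltW beta_gt0) (ltW s_gt0) S0 Sy; rewrite -e in tangent.
have proj : \sum_(i < P) (x i - (nu i + z)) ^+ 2 <= \sum_(i < P) (y i - (nu i + z)) ^+ 2.
  by apply: sparse_proj_optimal => // i j ij; rewrite lerD2r nu_anti.
have := ler_wpM2l (ltW (divr_gt0 mu_gt0 (ltr0Sn R 1))) proj.
rewrite lee_fin (sum_sqr_shift x nu z) (sum_sqr_shift y nu z) Sx.
lra.
Qed.

Theorem lemma3 (R : realType) (P w : nat) (mu beta s : R) (nu : 'I_P -> R) :
  (3 <= P)%N -> (1 < w)%N -> (w < P)%N ->
  0 < mu -> 0 < beta -> 0 < s ->
  (forall i j : 'I_P, (i <= j)%N -> nu j <= nu i) ->
  exists (x : 'I_P -> R) (zeta : R),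
    is_minimizer w beta s mu nu x /\
    (forall i : 'I_P, x i = if (i < w)%N then Num.max 0 (nu i + zeta) else 0) /\
    0 < zeta /\ 0 < Ssum w nu zeta /\
    mu * zeta = dUk beta s (Ssum w nu zeta) /\
    (forall j : 'I_P, (1 <= j < w)%N -> idx_cond w mu beta s nu j ->
       (forall k : 'I_P, (1 <= k < j)%N -> ~ idx_cond w mu beta s nu k) ->
       largest_root (cubic_eq j mu beta s nu) zeta) /\
    ((forall j : 'I_P, (1 <= j < w)%N -> ~ idx_cond w mu beta s nu j) ->
       largest_root (cubic_eq w mu beta s nu) zeta).
Proof.
move=> P3 w1 wP mu_gt0 beta_gt0 s_gt0 nu_anti.
pose i0 : 'I_P := Ordinal (leq_trans (isT : (0 < 3)%N) P3).
have i0_top : forall i, nu i <= nu i0 by move=> i; apply: nu_anti.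
have i0w : (i0 < w)%N := ltnW w1.
have [z zs] := stationary_exists mu_gt0 beta_gt0 s_gt0 i0w i0_top.
have inactive := idx_cond_inactive mu_gt0 beta_gt0 s_gt0 zs.
have root := stationary_largest_root mu_gt0 beta_gt0 s_gt0 zs.
have active m : (forall k : 'I_P, (1 <= k < m)%N -> ~ idx_cond w mu beta s nu k) ->
    forall i : 'I_P, (i < m)%N -> 0 < nu i + z.
  move=> none i im; have [i_0 | i_pos] := posnP i.
    by apply: lt_le_trans (stationary_head i0_top zs) _; rewrite lerD2r nu_anti ?i_0.
  by rewrite ltNge; apply/negP => /inactive; apply: none; rewrite i_pos.
exists (sparse_proj w (fun i => nu i + z)), z.
have [S_gt0 e] := zs.
split; first exact: stationary_minimizer.
split; first by [].
split; first exact: stationary_gt0 zs.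
do 2 (split; first by []).
split=> [j /andP[_ jw] /inactive j_inact earlier | none].
  apply: root (ltnW jw) (active _ earlier) _ => i /andP[ji _].
  by apply: le_trans j_inact; rewrite lerD2r nu_anti.
by apply: root (leqnn w) (active _ none) _ => i /andP[wi iw]; rewrite leqNgt iw in wi.
Qed.
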